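(* Let $X$ be a strictly convex normed plane, let $K_4$ have vertex set $\{v_1,v_2,v_3,v_4\}$, let $e=v_1v_4$, and let $p$ be a placement of $K_4-e$ in 3-cycle general position. Then: (i) every placement $q$ of $K_4-e$ with $\|q_v-q_w\|=\|p_v-p_w\|$ for all edges $vw$ of $K_4-e$ is also in 3-cycle general position; (ii) if $(K_4-e,p)$ is well-positioned, then it is independent.
   Context: A normed plane is a 2-dimensional real normed space. $X$ is strictly convex if $\|tx+(1-t)y\|<1$ for all distinct $x,y$ with $\|x\|=\|y\|=1$ and all $t\in(0,1)$. A placement of $K_4-e$ is in 3-cycle general position if for each of its two triangles $\{v_1,v_2,v_3\}$ and $\{v_2,v_3,v_4\}$ the three image points are affinely independent (not collinear). A nonzero $x\in X$ is smooth if it has exactly one support functional $f\in X^*$ ($\|f\|=\|x\|$, $f(x)=\|x\|^2$), denoted $\varphi(x)$. A placement is well-positioned if $p_v-p_w$ is smooth for every edge $vw$; then $\varphi_{v,w}:=\varphi((p_v-p_w)/\|p_v-p_w\|)$, and the framework is independent if the linear map $X^{V}\to\mathbb{R}^{E}$, $u\mapsto(\varphi_{v,w}(u_v-u_w))_{vw\in E}$, is surjective. *)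

From Stdlib Require Import Reals.
Open Scope R_scope.

Definition vec : Type := (R * R)%type.
Definition vzero : vec := (0, 0).
Definition vadd (x y : vec) : vec := (fst x + fst y, snd x + snd y).
Definition vscale (c : R) (x : vec) : vec := (c * fst x, c * snd x).
Definition vsub (x y : vec) : vec := vadd x (vscale (-1) y).

(* A norm on R^2 (every 2-dim real normed space is isometric to such). *)
Record is_norm (N : vec -> R) : Prop := {
  norm_def : forall x, N x = 0 -> x = vzero;
  norm_hom : forall c x, N (vscale c x) = Rabs c * N x;
  norm_tri : forall x y, N (vadd x y) <= N x + N y }.

Definition strictly_convex (N : vec -> R) : Prop :=
  forall x y : vec, x <> y -> N x = 1 -> N y = 1 ->
    forall t : R, 0 < t < 1 -> N (vadd (vscale t x) (vscale (1 - t) y)) < 1.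

(* Linear functionals on R^2, represented by their coefficients. *)
Definition functional : Type := (R * R)%type.
Definition fapp (f : functional) (x : vec) : R := fst f * fst x + snd f * snd x.

Definition dual_norm_is (N : vec -> R) (f : functional) (r : R) : Prop :=
  is_lub (fun s => exists y, N y <= 1 /\ s = fapp f y) r.

Definition support_functional (N : vec -> R) (x : vec) (f : functional) : Prop :=
  dual_norm_is N f (N x) /\ fapp f x = (N x) ^ 2.

Definition smooth (N : vec -> R) (x : vec) : Prop :=
  x <> vzero /\ exists! f : functional, support_functional N x f.

Definition normalize (N : vec -> R) (x : vec) : vec := vscale (/ N x) x.

(* The graph K4 - e, with e = v1 v4. *)
Inductive V4 := v1 | v2 | v3 | v4.
Inductive E5 := e12 | e13 | e23 | e24 | e34.
Definition esrc (e : E5) : V4 :=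
  match e with e12 => v1 | e13 => v1 | e23 => v2 | e24 => v2 | e34 => v3 end.
Definition edst (e : E5) : V4 :=
  match e with e12 => v2 | e13 => v3 | e23 => v3 | e24 => v4 | e34 => v4 end.

Definition placement : Type := V4 -> vec.

Definition affinely_independent3 (a b c : vec) : Prop :=
  forall l1 l2 l3 : R, l1 + l2 + l3 = 0 ->
    vadd (vscale l1 a) (vadd (vscale l2 b) (vscale l3 c)) = vzero ->
    l1 = 0 /\ l2 = 0 /\ l3 = 0.

Definition cycle3_general_position (p : placement) : Prop :=
  affinely_independent3 (p v1) (p v2) (p v3) /\
  affinely_independent3 (p v2) (p v3) (p v4).

Definition well_positioned (N : vec -> R) (p : placement) : Prop :=
  forall e : E5, smooth N (vsub (p (esrc e)) (p (edst e))).

(* Independence: the map u |-> (phi_{v,w}(u_v - u_w))_{vw in E} is surjective,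
   where phi_{v,w} is the (unique, under well-positionedness) support
   functional of the normalized edge vector. *)
Definition independent (N : vec -> R) (p : placement) : Prop :=
  forall phi : E5 -> functional,
    (forall e, support_functional N
                 (normalize N (vsub (p (esrc e)) (p (edst e)))) (phi e)) ->
    forall b : E5 -> R, exists u : V4 -> vec,
      forall e, fapp (phi e) (vsub (u (esrc e)) (u (edst e))) = b e.

From Stdlib Require Import Reals Lra Psatz.
Open Scope R_scope.

(* Everything is driven by the cross product [det u w] of two vectors of R^2,
   which vanishes exactly when u and w are parallel.

   (i)  In a strictly convex plane the triangle inequality is strict for
        non-parallel vectors, so in a nondegenerate triangle each side is
        strictly shorter than the sum of the other two; in a degenerate
        (collinear) triangle one side is the sum of the other two.  Hence
        edge lengths determine whether a triangle is degenerate, and both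
        triangles of K4 - e stay nondegenerate under any length-preserving
        placement.  By strict convexity a functional exposes at most one
        unit vector, so the support functionals of two non-parallel unit
        vectors are linearly independent.  At v1 (edges 12, 13) and at v4
        (edges 24, 34) the edges are non-parallel, so the linear system
        defining independence is solved by fixing u2 = 0, choosing u3 on the
        line of edge 23, and solving two 2x2 systems (Cramer) for u1 and u4. *)

Definition det (u w : vec) : R := fst u * snd w - snd u * fst w.

Ltac coords := unfold det, vsub, vadd, vscale, vzero, fapp in *; simpl in *.

Lemma det_zero_parallel (u w : vec) :
  det u w = 0 -> u = vzero \/ exists s, w = vscale s u.
Proof.
  destruct u as [u1 u2], w as [w1 w2]; unfold det; simpl; intro D.
  destruct (Req_dec u1 0) as [Z1|Z1]; [destruct (Req_dec u2 0) as [Z2|Z2]|].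
  - left; subst; reflexivity.
  - right; exists (w2 / u2); unfold vscale; simpl; f_equal.
    + apply Rmult_eq_reg_l with u2; [field_simplify; lra | exact Z2].
    + field; exact Z2.
  - right; exists (w1 / u1); unfold vscale; simpl; f_equal.
    + field; exact Z1.
    + apply Rmult_eq_reg_l with u1; [field_simplify; lra | exact Z1].
Qed.

Lemma vsub_eq_zero (a b : vec) : vsub a b = vzero -> a = b.
Proof.
  destruct a, b; coords; intro E; injection E; intros; f_equal; lra.
Qed.

Lemma affinely_independent3_det (a b c : vec) :
  affinely_independent3 a b c <-> det (vsub b a) (vsub c a) <> 0.
Proof.
  split.
  - intros H D.
    destruct (det_zero_parallel _ _ D) as [Z | [s Hs]].
    + destruct (H (-1) 1 0) as [H1 _]; [lra | | lra].
      apply vsub_eq_zero in Z; subst; coords; f_equal; ring.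
    + destruct (H (s - 1) (- s) 1) as [_ [_ H3]]; [lra | | lra].
      pose proof (f_equal fst Hs); pose proof (f_equal snd Hs).
      coords; f_equal; lra.
  - intros D l1 l2 l3 Hs Hv.
    set (z := vadd (vscale l2 (vsub b a)) (vscale l3 (vsub c a))).
    assert (Hz : z = vzero).
    { assert (E1 := f_equal fst Hv); assert (E2 := f_equal snd Hv).
      subst z; coords; f_equal; nra. }
    assert (Z2 : l2 * det (vsub b a) (vsub c a) = 0).
    { transitivity (det z (vsub c a)); [subst z; coords; ring |].
      rewrite Hz; coords; ring. }
    assert (Z3 : l3 * det (vsub b a) (vsub c a) = 0).
    { transitivity (det (vsub b a) z); [subst z; coords; ring |].
      rewrite Hz; coords; ring. }
    apply Rmult_integral in Z2, Z3.
    destruct Z2 as [Z2 | Z2]; [| contradiction].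
    destruct Z3 as [Z3 | Z3]; [lra | contradiction].
Qed.

Section NormedPlane.

Variable N : vec -> R.
Hypothesis HN : is_norm N.

Lemma norm_zero : N vzero = 0.
Proof.
  replace vzero with (vscale 0 vzero) by (coords; f_equal; ring).
  rewrite (norm_hom N HN), Rabs_R0; ring.
Qed.

Lemma norm_opp (x : vec) : N (vscale (-1) x) = N x.
Proof.
  rewrite (norm_hom N HN), Rabs_left by lra; ring.
Qed.

Lemma norm_nonneg (x : vec) : 0 <= N x.
Proof.
  pose proof (norm_tri N HN x (vscale (-1) x)) as H.
  replace (vadd x (vscale (-1) x)) with vzero in H by (coords; f_equal; ring).
  rewrite norm_zero, norm_opp in H; lra.
Qed.

Lemma norm_pos (x : vec) : x <> vzero -> 0 < N x.
Proof.
  intro Hx; destruct (norm_nonneg x) as [H | H]; [exact H |].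
  exfalso; apply Hx, (norm_def N HN); auto.
Qed.

Lemma norm_vsub_sym (a b : vec) : N (vsub a b) = N (vsub b a).
Proof.
  replace (vsub a b) with (vscale (-1) (vsub b a)) by (coords; f_equal; ring).
  apply norm_opp.
Qed.

Lemma norm_normalize (u : vec) : 0 < N u -> N (normalize N u) = 1.
Proof.
  intro H; unfold normalize.
  rewrite (norm_hom N HN), Rabs_right; [field; lra |].
  left; apply Rinv_0_lt_compat, H.
Qed.

Lemma collinear_distances (A B C : vec) :
  det (vsub B A) (vsub C A) = 0 ->
  N (vsub A C) = N (vsub A B) + N (vsub B C) \/
  N (vsub A B) = N (vsub A C) + N (vsub B C) \/
  N (vsub B C) = N (vsub A B) + N (vsub A C).
Proof.
  intro D; destruct (det_zero_parallel _ _ D) as [Z | [s Hs]].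
  - apply vsub_eq_zero in Z; subst B; left.
    replace (vsub A A) with vzero by (coords; f_equal; ring).
    rewrite norm_zero; ring.
  - assert (EAC : vsub A C = vscale s (vsub A B)).
    { pose proof (f_equal fst Hs); pose proof (f_equal snd Hs).
      coords; f_equal; lra. }
    assert (EBC : vsub B C = vscale (s - 1) (vsub A B)).
    { pose proof (f_equal fst Hs); pose proof (f_equal snd Hs).
      coords; f_equal; lra. }
    rewrite EAC, EBC, !(norm_hom N HN).
    pose proof (norm_nonneg (vsub A B)).
    unfold Rabs; destruct (Rcase_abs s), (Rcase_abs (s - 1)); nra.
Qed.

Hypothesis Hsc : strictly_convex N.

(* Strict triangle inequality for non-parallel vectors: the normalized
   vectors are distinct unit vectors, and x + y is a positive multiple of a
   proper convex combination of them. *)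
Lemma strict_triangle (x y : vec) : det x y <> 0 -> N (vadd x y) < N x + N y.
Proof.
  intro D.
  assert (Ha : 0 < N x) by (apply norm_pos; intro E; subst; apply D; coords; ring).
  assert (Hb : 0 < N y) by (apply norm_pos; intro E; subst; apply D; coords; ring).
  set (a := N x) in *; set (b := N y) in *.
  assert (Hne : normalize N x <> normalize N y).
  { unfold normalize; fold a b; intro E; injection E; intros E2 E1.
    apply D; unfold det.
    apply Rmult_eq_reg_l with (/ a); [| apply Rinv_neq_0_compat; lra].
    replace (/ a * (fst x * snd y - snd x * fst y))
      with ((/ a * fst x) * snd y - (/ a * snd x) * fst y) by ring.
    rewrite E1, E2; ring. }
  assert (Ht : 0 < a / (a + b) < 1).
  { split; [apply Rdiv_lt_0_compat; lra |].
    apply Rmult_lt_reg_r with (a + b); [lra | field_simplify; lra]. }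
  pose proof (Hsc _ _ Hne (norm_normalize x Ha) (norm_normalize y Hb) _ Ht) as H.
  replace (vadd (vscale (a / (a + b)) (normalize N x))
                (vscale (1 - a / (a + b)) (normalize N y)))
    with (vscale (/ (a + b)) (vadd x y)) in H
    by (unfold normalize, vscale, vadd; fold a b; simpl; f_equal; field; lra).
  rewrite (norm_hom N HN), Rabs_right in H
    by (left; apply Rinv_0_lt_compat; lra).
  apply Rmult_lt_reg_l with (/ (a + b)); [apply Rinv_0_lt_compat; lra |].
  replace (/ (a + b) * (a + b)) with 1 by (field; lra); exact H.
Qed.

Lemma triangle_lengths_nondegenerate (A B C A' B' C' : vec) :
  det (vsub B A) (vsub C A) <> 0 ->
  N (vsub A' B') = N (vsub A B) -> N (vsub A' C') = N (vsub A C) ->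
  N (vsub B' C') = N (vsub B C) ->
  det (vsub B' A') (vsub C' A') <> 0.
Proof.
  intros D EAB EAC EBC D'.
  assert (T1 : N (vsub A C) < N (vsub A B) + N (vsub B C)).
  { replace (vsub A C) with (vadd (vsub A B) (vsub B C)) by (coords; f_equal; ring).
    apply strict_triangle; intro E; apply D; coords; lra. }
  assert (T2 : N (vsub A B) < N (vsub A C) + N (vsub B C)).
  { replace (vsub A B) with (vadd (vsub A C) (vsub C B)) by (coords; f_equal; ring).
    rewrite (norm_vsub_sym B C).
    apply strict_triangle; intro E; apply D; coords; lra. }
  assert (T3 : N (vsub B C) < N (vsub A B) + N (vsub A C)).
  { replace (vsub B C) with (vadd (vsub B A) (vsub A C)) by (coords; f_equal; ring).
    rewrite (norm_vsub_sym A B).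
    apply strict_triangle; intro E; apply D; coords; lra. }
  destruct (collinear_distances A' B' C' D') as [H | [H | H]];
    rewrite EAB, EAC, EBC in H; lra.
Qed.

Definition exposes (f : functional) (x : vec) : Prop :=
  (forall z, N z <= 1 -> fapp f z <= 1) /\ fapp f x = 1.

Lemma support_functional_exposes (x : vec) (f : functional) :
  N x = 1 -> support_functional N x f -> exposes f x.
Proof.
  intros Hx [[Hub _] Hfx]; split.
  - intros z Hz; rewrite <- Hx; apply Hub; exists z; auto.
  - rewrite Hfx, Hx; ring.
Qed.

(* Strict convexity: a functional exposes at most one unit vector, since it
   would otherwise exceed 1 on the normalized midpoint of the two. *)
Lemma exposed_unit_vector_unique (f : functional) (x y : vec) :
  N x = 1 -> N y = 1 -> x <> y -> exposes f x -> exposes f y -> False.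
Proof.
  intros Hx Hy Hne [Hb fx] [_ fy].
  assert (Ht : 0 < 1 / 2 < 1) by lra.
  pose proof (Hsc x y Hne Hx Hy _ Ht) as Hm.
  set (m := vadd (vscale (1 / 2) x) (vscale (1 - 1 / 2) y)) in *.
  assert (fm : fapp f m = 1) by (unfold m; coords; nra).
  assert (Pm : 0 < N m).
  { apply norm_pos; intro E; rewrite E in fm; coords; lra. }
  assert (Nz : N (vscale (/ N m) m) <= 1).
  { rewrite (norm_hom N HN), Rabs_right; [right; field; lra |].
    left; apply Rinv_0_lt_compat, Pm. }
  pose proof (Hb _ Nz) as H.
  replace (fapp f (vscale (/ N m) m)) with (/ N m * fapp f m) in H by (coords; ring).
  rewrite fm in H.
  assert (N m * / N m = 1) by (field; lra).
  nra.
Qed.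

(* Functionals exposing two unit vectors that are neither equal nor
   antipodal are linearly independent: a proportional g = c f would force
   c = 1 or c = -1, so f would expose y or -y as well as x. *)
Lemma exposing_functionals_independent (x y : vec) (f g : functional) :
  N x = 1 -> N y = 1 -> x <> y -> x <> vscale (-1) y ->
  exposes f x -> exposes g y -> det f g <> 0.
Proof.
  intros Hx Hy Hne Hanti Ef Eg D.
  destruct (det_zero_parallel _ _ D) as [Z | [c Hc]].
  { destruct Ef as [_ fx]; rewrite Z in fx; coords; lra. }
  assert (Hg : forall z, fapp g z = c * fapp f z) by (intro z; subst g; coords; ring).
  destruct Ef as [Bf fx], Eg as [Bg gy].
  assert (Nmx : N (vscale (-1) x) <= 1) by (rewrite norm_opp; lra).
  assert (Nmy : N (vscale (-1) y) <= 1) by (rewrite norm_opp; lra).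
  assert (fmx : fapp f (vscale (-1) x) = -1) by (coords; lra).
  assert (fmy : fapp f (vscale (-1) y) = - fapp f y) by (coords; ring).
  pose proof (Bg x (Req_le _ _ Hx)) as h1.
  pose proof (Bg _ Nmx) as h2.
  pose proof (Bf y (Req_le _ _ Hy)) as h3.
  pose proof (Bf _ Nmy) as h4.
  rewrite Hg, fx in h1; rewrite Hg, fmx in h2; rewrite fmy in h4; rewrite Hg in gy.
  assert (Hc1 : c = 1 \/ c = -1) by (destruct (Rle_lt_dec 0 c); [left | right]; nra).
  assert (Efx : exposes f x) by (split; auto).
  destruct Hc1; subst c.
  - apply (exposed_unit_vector_unique f x y); auto; split; auto; lra.
  - apply (exposed_unit_vector_unique f x (vscale (-1) y)); auto.
    + rewrite norm_opp; exact Hy.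
    + split; auto; lra.
Qed.

Lemma normalize_not_parallel (u w : vec) :
  0 < N u -> 0 < N w -> det u w <> 0 ->
  normalize N u <> normalize N w /\
  normalize N u <> vscale (-1) (normalize N w).
Proof.
  intros Ha Hb D; set (a := N u) in *; set (b := N w) in *.
  assert (Hab : / a * / b <> 0)
    by (apply Rmult_integral_contrapositive; split; apply Rinv_neq_0_compat; lra).
  unfold normalize, vscale; fold a b.
  split; intro E; injection E; intros E2 E1; apply D;
    apply Rmult_eq_reg_l with (/ a * / b); auto; unfold det;
    replace (/ a * / b * (fst u * snd w - snd u * fst w))
      with ((/ a * fst u) * (/ b * snd w) - (/ a * snd u) * (/ b * fst w)) by ring;
    rewrite E1, E2; ring.
Qed.

Lemma support_functionals_independent (u w : vec) (f g : functional) :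
  det u w <> 0 ->
  support_functional N (normalize N u) f ->
  support_functional N (normalize N w) g ->
  det f g <> 0.
Proof.
  intros D Sf Sg.
  assert (Hu : 0 < N u) by (apply norm_pos; intro E; subst; apply D; coords; ring).
  assert (Hw : 0 < N w) by (apply norm_pos; intro E; subst; apply D; coords; ring).
  destruct (normalize_not_parallel u w Hu Hw D) as [Hne Hanti].
  apply (exposing_functionals_independent _ _ _ _
           (norm_normalize u Hu) (norm_normalize w Hw) Hne Hanti);
    apply support_functional_exposes; auto; apply norm_normalize; auto.
Qed.

End NormedPlane.

Lemma fapp_vsub (f : functional) (x y : vec) : fapp f (vsub x y) = fapp f x - fapp f y.
Proof. coords; ring. Qed.

Lemma fapp_vscale (f : functional) (c : R) (x : vec) : fapp f (vscale c x) = c * fapp f x.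
Proof. coords; ring. Qed.

Lemma fapp_vzero (f : functional) : fapp f vzero = 0.
Proof. coords; ring. Qed.

Lemma cramer (f g : functional) :
  det f g <> 0 -> forall r s, exists z, fapp f z = r /\ fapp g z = s.
Proof.
  unfold det; intros D r s.
  exists ((r * snd g - s * snd f) / (fst f * snd g - snd f * fst g),
          (fst f * s - fst g * r) / (fst f * snd g - snd f * fst g)).
  unfold fapp; simpl; split; field; exact D.
Qed.

Lemma K4e_system_solvable (phi : E5 -> functional) (w : vec) :
  det (phi e12) (phi e13) <> 0 -> det (phi e24) (phi e34) <> 0 ->
  fapp (phi e23) w = 1 ->
  forall b : E5 -> R, exists u : V4 -> vec,
    forall e, fapp (phi e) (vsub (u (esrc e)) (u (edst e))) = b e.
Proof.
  intros F1 F4 Hw b.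
  set (u3 := vscale (- b e23) w).
  destruct (cramer _ _ F1 (b e12) (b e13 + fapp (phi e13) u3)) as [z1 [Z1 Z2]].
  destruct (cramer _ _ F4 (- b e24) (fapp (phi e34) u3 - b e34)) as [z4 [Z3 Z4]].
  exists (fun v => match v with v1 => z1 | v2 => vzero | v3 => u3 | v4 => z4 end).
  intro e; destruct e; cbn [esrc edst]; rewrite fapp_vsub, ?fapp_vzero; try lra.
  unfold u3; rewrite fapp_vscale, Hw; ring.
Qed.

Lemma cycle3_general_position_lengths (N : vec -> R) (HN : is_norm N)
  (Hsc : strictly_convex N) (p q : placement) :
  cycle3_general_position p ->
  (forall e : E5, N (vsub (q (esrc e)) (q (edst e))) = N (vsub (p (esrc e)) (p (edst e)))) ->
  cycle3_general_position q.
Proof.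
  intros [H123 H234] Hq.
  rewrite affinely_independent3_det in H123, H234.
  pose proof (Hq e12); pose proof (Hq e13); pose proof (Hq e23);
  pose proof (Hq e24); pose proof (Hq e34); cbn [esrc edst] in *.
  split; apply affinely_independent3_det.
  - apply (triangle_lengths_nondegenerate N HN Hsc (p v1) (p v2) (p v3)); auto.
  - apply (triangle_lengths_nondegenerate N HN Hsc (p v2) (p v3) (p v4)); auto.
Qed.

Lemma cycle3_general_position_independent (N : vec -> R) (HN : is_norm N)
  (Hsc : strictly_convex N) (p : placement) :
  cycle3_general_position p -> independent N p.
Proof.
  intros [H123 H234] phi Hphi.
  rewrite affinely_independent3_det in H123, H234.
  assert (P23 : 0 < N (vsub (p v2) (p v3))).
  { apply (norm_pos N HN); intro E; apply vsub_eq_zero in E.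
    apply H123; rewrite E; coords; ring. }
  apply (K4e_system_solvable phi (normalize N (vsub (p v2) (p v3)))).
  - apply (support_functionals_independent N HN Hsc
             (vsub (p v1) (p v2)) (vsub (p v1) (p v3))); [| apply Hphi ..].
    intro E; apply H123; coords; lra.
  - apply (support_functionals_independent N HN Hsc
             (vsub (p v2) (p v4)) (vsub (p v3) (p v4))); [| apply Hphi ..].
    intro E; apply H234; coords; lra.
  - apply (support_functional_exposes N), (Hphi e23).
    apply (norm_normalize N HN), P23.
Qed.

Theorem mainTheorem18 (N : vec -> R) (HN : is_norm N) (Hsc : strictly_convex N)
  (p : placement) (Hp : cycle3_general_position p) :
  (forall q : placement,
     (forall e : E5, N (vsub (q (esrc e)) (q (edst e))) = N (vsub (p (esrc e)) (p (edst e)))) ->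
     cycle3_general_position q) /\
  (well_positioned N p -> independent N p).
Proof.
  split.
  - intros q Hq; exact (cycle3_general_position_lengths N HN Hsc p q Hp Hq).
  - intros _; exact (cycle3_general_position_independent N HN Hsc p Hp).
Qed.
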